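(* Let $S\subseteq\mathbb{N}^{\mathbb{N}}$ and let $n>0$ be an integer. Then $S$ is $\mathbf{\Sigma}^0_n$ (respectively $\mathbf{\Pi}^0_n$, $\mathbf{\Delta}^0_n$) if and only if there is a $\Sigma_n$ (respectively $\Pi_n$, $\Delta_n$) sentence $\phi$ of $\mathscr{L}_{\max}$ with $S=\{f\in\mathbb{N}^{\mathbb{N}}:\mathscr{M}_f\models\phi\}$.
   Context: Baire space $\mathbb{N}^{\mathbb{N}}$ carries the product of discrete topologies; $\mathbf{\Sigma}^0_n,\mathbf{\Pi}^0_n,\mathbf{\Delta}^0_n$ are the boldface Borel pointclasses. The language $\mathscr{L}_{\max}$ is the first-order language (with equality) having: a constant symbol $\overline{n}$ for each $n\in\mathbb{N}$; an $n$-ary function symbol $\tilde w$ for each $w:\mathbb{N}^n\to\mathbb{N}$; an $n$-ary predicate symbol $\tilde p$ for each $p\subseteq\mathbb{N}^n$; a special unary function symbol $\mathbf{f}$; and, for every $n$ and every $G:\mathbb{N}^n\times\mathbb{N}^{<\mathbb{N}}\to\mathbb{N}$, an $(n+1)$-ary function symbol $G\circ\mathbf{f}$. For $f\in\mathbb{N}^{\mathbb{N}}$, $\mathscr{M}_f$ is the structure with universe $\mathbb{N}$ interpreting $\overline n$ as $n$, $\tilde w$ as $w$, $\tilde p$ as $p$, $\mathbf f$ as $f$, and $G\circ\mathbf f$ as $(m_1,\dots,m_n,m)\mapsto G(m_1,\dots,m_n,f(0),\dots,f(m))$. Formula classes: ''quantifier-free'' means containing no quantifiers at all (not even bounded ones).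 $\Sigma_0=\Pi_0=\Delta_0$ is the set of quantifier-free formulas; $\Sigma_{n+1}=\{\exists x\,\phi:\phi\in\Pi_n\}$ and $\Pi_{n+1}=\{\forall x\,\phi:\phi\in\Sigma_n\}$; a formula is $\Delta_{n+1}$ if it is equivalent, in every structure $\mathscr{M}_f$ ($f\in\mathbb{N}^{\mathbb{N}}$), to some $\Sigma_{n+1}$ formula of $\mathscr{L}_{\max}$ and also to some $\Pi_{n+1}$ formula of $\mathscr{L}_{\max}$. *)

From Stdlib Require Import Arith List.
From Stdlib Require Fin.
Import ListNotations.

Definition Baire := nat -> nat.

(** Open sets of the product of discrete topologies: membership is witnessed
    by a finite initial segment. *)
Definition isOpen (S : Baire -> Prop) : Prop :=
  forall f, S f -> exists k, forall g, (forall i, i < k -> g i = f i) -> S g.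

(** boldSigma n S : S is Sigma^0_n (meaningful for n >= 1).
    Sigma^0_1 = open; Sigma^0_{k+2} = countable unions of Pi^0_{k+1} sets;
    Pi^0_n = complements of Sigma^0_n. *)
Fixpoint boldSigma (n : nat) (S : Baire -> Prop) : Prop :=
  match n with
  | 0 => False
  | 1 => isOpen S
  | S k => exists A : nat -> Baire -> Prop,
             (forall i, boldSigma k (fun f => ~ A i f)) /\
             (forall f, S f <-> exists i, A i f)
  end.

Definition boldPi (n : nat) (S : Baire -> Prop) : Prop :=
  boldSigma n (fun f => ~ S f).

Definition boldDelta (n : nat) (S : Baire -> Prop) : Prop :=
  boldSigma n S /\ boldPi n S.

(** N^n is represented as [Fin.t n -> nat]; N^{<N} as [list nat].
    Variables are named by natural numbers. *)
Inductive term : Type :=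
| TVar   : nat -> term
| TConst : nat -> term
| TFun   : forall n : nat, ((Fin.t n -> nat) -> nat) ->
             (Fin.t n -> term) -> term
| TF     : term -> term
| TGf    : forall n : nat, ((Fin.t n -> nat) -> list nat -> nat) ->
             (Fin.t n -> term) -> term -> term.

Inductive formula : Type :=
| FEq   : term -> term -> formula
| FPred : forall n : nat, ((Fin.t n -> nat) -> Prop) ->
            (Fin.t n -> term) -> formula
| FNot  : formula -> formula
| FAnd  : formula -> formula -> formula
| FOr   : formula -> formula -> formula
| FImp  : formula -> formula -> formula
| FEx   : nat -> formula -> formula
| FAll  : nat -> formula -> formula.

Fixpoint evalT (f : Baire) (env : nat -> nat) (t : term) : nat :=
  match t with
  | TVar x => env x
  | TConst c => c
  | TFun n w args => w (fun i => evalT f env (args i))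
  | TF t1 => f (evalT f env t1)
  | TGf n G args t1 =>
      G (fun i => evalT f env (args i)) (map f (seq 0 (S (evalT f env t1))))
  end.

Definition upd (env : nat -> nat) (x v : nat) : nat -> nat :=
  fun y => if Nat.eqb y x then v else env y.

Fixpoint sat (f : Baire) (env : nat -> nat) (phi : formula) : Prop :=
  match phi with
  | FEq t1 t2 => evalT f env t1 = evalT f env t2
  | FPred n p args => p (fun i => evalT f env (args i))
  | FNot a => ~ sat f env a
  | FAnd a b => sat f env a /\ sat f env b
  | FOr a b => sat f env a \/ sat f env b
  | FImp a b => sat f env a -> sat f env b
  | FEx x a => exists v, sat f (upd env x v) a
  | FAll x a => forall v, sat f (upd env x v) a
  end.

Fixpoint occT (x : nat) (t : term) : Prop :=
  match t with
  | TVar y => x = y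
  | TConst _ => False
  | TFun n _ args => exists i, occT x (args i)
  | TF t1 => occT x t1
  | TGf n _ args t1 => (exists i, occT x (args i)) \/ occT x t1
  end.

Fixpoint freeIn (x : nat) (phi : formula) : Prop :=
  match phi with
  | FEq t1 t2 => occT x t1 \/ occT x t2
  | FPred n _ args => exists i, occT x (args i)
  | FNot a => freeIn x a
  | FAnd a b | FOr a b | FImp a b => freeIn x a \/ freeIn x b
  | FEx y a | FAll y a => x <> y /\ freeIn x a
  end.

Definition sentence (phi : formula) : Prop := forall x, ~ freeIn x phi.

(** M_f |= phi for a sentence (the assignment is irrelevant for sentences). *)
Definition models (f : Baire) (phi : formula) : Prop := sat f (fun _ => 0) phi.

Fixpoint qf (phi : formula) : Prop :=
  match phi with
  | FEq _ _ | FPred _ _ _ => True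
  | FNot a => qf a
  | FAnd a b | FOr a b | FImp a b => qf a /\ qf b
  | FEx _ _ | FAll _ _ => False
  end.

Fixpoint SigmaF (n : nat) (phi : formula) : Prop :=
  match n with
  | 0 => qf phi
  | S k => match phi with FEx _ a => PiF k a | _ => False end
  end
with PiF (n : nat) (phi : formula) : Prop :=
  match n with
  | 0 => qf phi
  | S k => match phi with FAll _ a => SigmaF k a | _ => False end
  end.

Definition DeltaF (n : nat) (phi : formula) : Prop :=
  (exists psi, SigmaF n psi /\ forall f env, sat f env phi <-> sat f env psi) /\
  (exists chi, PiF n chi /\ forall f env, sat f env phi <-> sat f env chi).

(** Upper bound.  The value of a term in M_f depends only on a finite initial
   segment of f, so a quantifier-free formula is locally constant in f.  By
   induction on n, a Sigma_{n} (Pi_{n}) formula then defines a Sigma^0_n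
   (Pi^0_n) set: each existential quantifier is a countable union.

   Lower bound.  By induction on k we build, for every countable family
   (P_p)_p of Sigma^0_{k+1} sets, a template F turning a term t into a
   Sigma_{k+1} formula F(t) expressing "f lies in P_{t}".  For k = 0 the
   symbol G o f lets us ask whether the cylinder fixed by f(0..m) lies inside
   the open set P_t.  For k+1 we write P_p as a union of Pi^0_{k+1} sets
   A_{p,i}, apply the induction hypothesis to the complements indexed by the
   Cantor code <p,i>, and negate with a quantifier-dualizing operation.
   Pi and Delta follow by complementation and the irrelevance of the
   assignment for sentences. *)
From Stdlib Require Import Arith List Lia Classical ClassicalEpsilon Cantor
  FunctionalExtensionality.

Definition agree (g f : Baire) (k : nat) : Prop := forall i, i < k -> g i = f i.

Definition locally_constant {X : Type} (h : Baire -> X) (f : Baire) : Prop :=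
  exists k, forall g, agree g f k -> h g = h f.

Lemma agree_le (g f : Baire) (k k' : nat) : k <= k' -> agree g f k' -> agree g f k.
Proof. intros Hk H i Hi; apply H; lia. Qed.

Lemma locally_constant_pair {X Y : Type} (a : Baire -> X) (b : Baire -> Y) f :
  locally_constant a f -> locally_constant b f ->
  locally_constant (fun g => (a g, b g)) f.
Proof.
  intros [ka Ha] [kb Hb]; exists (max ka kb); intros g Hg.
  rewrite (Ha g), (Hb g); trivial; eapply agree_le; try exact Hg; lia.
Qed.

Lemma locally_constant_tuple {X : Type} (n : nat) (h : Fin.t n -> Baire -> X) f :
  (forall i, locally_constant (h i) f) ->
  locally_constant (fun g i => h i g) f.
Proof.
  induction n as [|n IH]; intros Hh.
  - exists 0; intros g _; apply functional_extensionality; intro i.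
    exact (Fin.case0 (fun i => h i g = h i f) i).
  - destruct (IH (fun i => h (Fin.FS i)) (fun i => Hh (Fin.FS i))) as [k1 H1].
    destruct (Hh Fin.F1) as [k0 H0].
    exists (max k1 k0); intros g Hg; apply functional_extensionality; intro i.
    apply (Fin.caseS' i (fun i => h i g = h i f)).
    + apply H0; eapply agree_le; try exact Hg; lia.
    + intro j; apply (equal_f (H1 g (agree_le g f k1 (max k1 k0) ltac:(lia) Hg)) j).
Qed.

(** Near [f], a locally constant index [u] is fixed and [g] agrees with [f]
    up to that index; this is what reading [f] at a computed point needs. *)
Lemma locally_constant_prefix (u : Baire -> nat) f :
  locally_constant u f ->
  exists k, forall g, agree g f k -> u g = u f /\ agree g f (S (u f)).
Proof.
  intros [k Hk]; exists (max k (S (u f))); intros g Hg; split.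
  - apply Hk; eapply agree_le; try exact Hg; lia.
  - eapply agree_le; try exact Hg; lia.
Qed.

Lemma map_prefix_agree (f g : Baire) (m : nat) :
  agree g f m -> map g (seq 0 m) = map f (seq 0 m).
Proof. intro H; apply map_ext_in; intros a Ha; apply in_seq in Ha; apply H; lia. Qed.

Lemma evalT_locally_constant (t : term) (env : nat -> nat) (f : Baire) :
  locally_constant (fun g => evalT g env t) f.
Proof.
  induction t as [x|c|n w args IH|t IH|n G args IH t IHt]; simpl.
  - exists 0; auto.
  - exists 0; auto.
  - destruct (locally_constant_tuple n _ f IH) as [k Hk].
    exists k; intros g Hg; now rewrite (Hk g Hg).
  - destruct (locally_constant_prefix _ f IH) as [k Hk].
    exists k; intros g Hg; destruct (Hk g Hg) as [-> Hagree]; apply Hagree; lia.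
  - destruct (locally_constant_tuple n _ f IH) as [k1 H1].
    destruct (locally_constant_prefix _ f IHt) as [k2 H2].
    exists (max k1 k2); intros g Hg.
    destruct (H2 g) as [-> Hagree]; [eapply agree_le; try exact Hg; lia|].
    pose proof (map_prefix_agree f g _ Hagree) as Hprefix; simpl in Hprefix.
    rewrite (H1 g), Hprefix; trivial.
    eapply agree_le; try exact Hg; lia.
Qed.

Definition locally_determined (P : Baire -> Prop) (f : Baire) : Prop :=
  exists k, forall g, agree g f k -> (P g <-> P f).

Lemma locally_determined_of_constant {X : Type} (Q : X -> Prop) (h : Baire -> X) f :
  locally_constant h f -> locally_determined (fun g => Q (h g)) f.
Proof. intros [k Hk]; exists k; intros g Hg; now rewrite (Hk g Hg). Qed.

Lemma locally_determined_connective (c : Prop -> Prop -> Prop)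
    (Hc : forall A A' B B', (A <-> A') -> (B <-> B') -> (c A B <-> c A' B'))
    (P Q : Baire -> Prop) f :
  locally_determined P f -> locally_determined Q f ->
  locally_determined (fun g => c (P g) (Q g)) f.
Proof.
  intros [kp Hp] [kq Hq]; exists (max kp kq); intros g Hg.
  apply Hc; [apply Hp | apply Hq]; eapply agree_le; try exact Hg; lia.
Qed.

Lemma qf_locally_determined (a : formula) (env : nat -> nat) (f : Baire) :
  qf a -> locally_determined (fun g => sat g env a) f.
Proof.
  revert env; induction a as [t1 t2|n p args|a IH|a1 IH1 a2 IH2|a1 IH1 a2 IH2
                             |a1 IH1 a2 IH2|x a _|x a _];
    simpl; intros env Hqf; try contradiction.
  - apply (locally_determined_of_constant (fun v => fst v = snd v)
             (fun g => (evalT g env t1, evalT g env t2))).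
    apply locally_constant_pair; apply evalT_locally_constant.
  - apply (locally_determined_of_constant p (fun g i => evalT g env (args i))).
    apply locally_constant_tuple; intro i; apply evalT_locally_constant.
  - destruct (IH env Hqf) as [k Hk]; exists k; intros g Hg; rewrite (Hk g Hg); tauto.
  - apply (locally_determined_connective and); [tauto | apply IH1 | apply IH2]; tauto.
  - apply (locally_determined_connective or); [tauto | apply IH1 | apply IH2]; tauto.
  - apply (locally_determined_connective (fun A B => A -> B));
      [tauto | apply IH1 | apply IH2]; tauto.
Qed.

Lemma boldSigma_ext (n : nat) (A B : Baire -> Prop) :
  (forall f, A f <-> B f) -> boldSigma n A -> boldSigma n B.
Proof.
  destruct n as [|[|n]]; simpl; intros HAB; auto.
  - intros HA f Hf; apply HAB in Hf; destruct (HA f Hf) as [k Hk].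
    exists k; intros g Hg; apply HAB; auto.
  - intros [X [HX HA]]; exists X; split; auto; intro f; rewrite <- HAB; apply HA.
Qed.

Lemma qf_exists_open (a : formula) (x : nat) (env : nat -> nat) :
  qf a -> isOpen (fun f => exists v, sat f (upd env x v) a).
Proof.
  intros Hqf f [v Hv]; destruct (qf_locally_determined a (upd env x v) f Hqf) as [k Hk].
  exists k; intros g Hg; exists v; apply Hk; auto.
Qed.

Lemma qf_forall_closed (a : formula) (x : nat) (env : nat -> nat) :
  qf a -> isOpen (fun f => ~ forall v, sat f (upd env x v) a).
Proof.
  intros Hqf f Hf; apply not_all_ex_not in Hf; destruct Hf as [v Hv].
  destruct (qf_locally_determined a (upd env x v) f Hqf) as [k Hk].
  exists k; intros g Hg Hall; apply Hv, (Hk g Hg), Hall.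
Qed.

(** Each quantifier block adds one countable union (Sigma) or intersection (Pi). *)
Lemma formula_bold (k : nat) (phi : formula) (env : nat -> nat) :
  (SigmaF (S k) phi -> boldSigma (S k) (fun f => sat f env phi)) /\
  (PiF (S k) phi -> boldPi (S k) (fun f => sat f env phi)).
Proof.
  revert phi env; induction k as [|k IH]; intros phi env;
    split; intro Hphi; destruct phi as [| | | | | |x a|x a];
    simpl in Hphi; try contradiction.
  - apply qf_exists_open; exact Hphi.
  - apply qf_forall_closed; exact Hphi.
  - exists (fun v f => sat f (upd env x v) a); split.
    + intro v; apply (proj2 (IH a (upd env x v))); exact Hphi.
    + reflexivity.
  - exists (fun v f => ~ sat f (upd env x v) a); split.
    + intro v; eapply boldSigma_ext; [|apply (proj1 (IH a (upd env x v))); exact Hphi].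
      intro f; simpl; tauto.
    + intro f; split; [apply not_all_ex_not | intros [v Hv] Hall; apply Hv, Hall].
Qed.

Lemma evalT_env (t : term) (f : Baire) (env1 env2 : nat -> nat) :
  (forall y, occT y t -> env1 y = env2 y) -> evalT f env1 t = evalT f env2 t.
Proof.
  induction t as [x|c|n w args IH|t IH|n G args IH t IHt]; simpl; intro He.
  - auto.
  - reflexivity.
  - f_equal; apply functional_extensionality; intro i; apply IH; eauto.
  - f_equal; apply IH; auto.
  - rewrite IHt by auto; f_equal.
    apply functional_extensionality; intro i; apply IH; eauto.
Qed.

Lemma upd_agree (env1 env2 : nat -> nat) (x v : nat) (a : formula) :
  (forall y, freeIn y a -> y <> x -> env1 y = env2 y) ->
  forall y, freeIn y a -> upd env1 x v y = upd env2 x v y.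
Proof. intros He y Hy; unfold upd; destruct (Nat.eqb_spec y x); auto. Qed.

Lemma sat_env (phi : formula) (f : Baire) (env1 env2 : nat -> nat) :
  (forall x, freeIn x phi -> env1 x = env2 x) -> (sat f env1 phi <-> sat f env2 phi).
Proof.
  revert env1 env2; induction phi as [t1 t2|n p args|a IH|a1 IH1 a2 IH2|a1 IH1 a2 IH2
                                     |a1 IH1 a2 IH2|x a IH|x a IH];
    simpl; intros env1 env2 He.
  - now rewrite (evalT_env t1 f env1 env2), (evalT_env t2 f env1 env2) by auto.
  - replace (fun i => evalT f env1 (args i)) with (fun i => evalT f env2 (args i));
      [tauto|].
    apply functional_extensionality; intro i; symmetry; apply evalT_env; eauto.
  - now rewrite (IH env1 env2).
  - now rewrite (IH1 env1 env2), (IH2 env1 env2) by auto.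
  - now rewrite (IH1 env1 env2), (IH2 env1 env2) by auto.
  - now rewrite (IH1 env1 env2), (IH2 env1 env2) by auto.
  - pose proof (fun v => IH _ _ (upd_agree env1 env2 x v a (fun y Hy Hyx => He y (conj Hyx Hy)))).
    firstorder.
  - pose proof (fun v => IH _ _ (upd_agree env1 env2 x v a (fun y Hy Hyx => He y (conj Hyx Hy)))).
    firstorder.
Qed.

Lemma sentence_sat (phi : formula) (f : Baire) (env : nat -> nat) :
  sentence phi -> (sat f env phi <-> models f phi).
Proof. intro Hs; apply sat_env; intros x Hx; destruct (Hs x Hx). Qed.

Fixpoint dual (phi : formula) : formula :=
  match phi with
  | FEx x a => FAll x (dual a)
  | FAll x a => FEx x (dual a)
  | _ => FNot phi
  end.

Lemma dual_sat (phi : formula) (f : Baire) (env : nat -> nat) :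
  sat f env (dual phi) <-> ~ sat f env phi.
Proof.
  revert env; induction phi; intro env; simpl; try tauto; setoid_rewrite IHphi.
  - firstorder.
  - split; [firstorder | apply not_all_ex_not].
Qed.

Lemma dual_free (phi : formula) (x : nat) : freeIn x (dual phi) <-> freeIn x phi.
Proof. induction phi; simpl; try tauto; rewrite IHphi; tauto. Qed.

Lemma dual_class (k : nat) (phi : formula) :
  (SigmaF k phi -> PiF k (dual phi)) /\ (PiF k phi -> SigmaF k (dual phi)).
Proof.
  revert phi; induction k as [|k IH]; intro phi;
    destruct phi; simpl; try tauto; split; intro H; try contradiction; apply IH, H.
Qed.

Lemma definable_complement (k : nat) (A : Baire -> Prop) (phi : formula) :
  sentence phi -> SigmaF k phi -> (forall f, A f <-> models f phi) ->
  sentence (dual phi) /\ PiF k (dual phi) /\ (forall f, ~ A f <-> models f (dual phi)).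
Proof.
  intros Hs Hphi HA; split; [|split].
  - intros x Hx; exact (Hs x (proj1 (dual_free phi x) Hx)).
  - apply dual_class, Hphi.
  - intro f; unfold models; rewrite dual_sat; fold (models f phi); rewrite HA; tauto.
Qed.

(** [F] uniformly defines the family [P] at level [k]: [F t] is a
    Sigma_{k+1} formula with the free variables of [t], and, when [t] avoids
    the variables [1..k+1] bound inside [F], it expresses [f \in P_t]. *)
Definition uniformly_defines (k : nat) (P : nat -> Baire -> Prop)
    (F : term -> formula) : Prop :=
  forall t, SigmaF (S k) (F t) /\ (forall x, freeIn x (F t) -> occT x t) /\
    ((forall y, occT y t -> S k < y) ->
     forall f env, sat f env (F t) <-> P (evalT f env t) f).

Lemma evalT_upd_fresh (t : term) (f : Baire) (env : nat -> nat) (x v : nat) :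
  (forall y, occT y t -> x < y) -> evalT f (upd env x v) t = evalT f env t.
Proof.
  intro Ht; apply evalT_env; intros y Hy; unfold upd.
  destruct (Nat.eqb_spec y x); [apply Ht in Hy; lia | reflexivity].
Qed.

Lemma nth_map_seq (f : Baire) (m i : nat) : i < m -> nth i (map f (seq 0 m)) 0 = f i.
Proof.
  intro Hi; rewrite nth_indep with (d' := f 0) by (rewrite length_map, length_seq; lia).
  now rewrite map_nth, seq_nth by lia.
Qed.

Definition cylinder_test (P : nat -> Baire -> Prop) (a : Fin.t 1 -> nat)
    (s : list nat) : nat :=
  if excluded_middle_informative
       (forall g, (forall i, i < length s -> g i = nth i s 0) -> P (a Fin.F1) g)
  then 1 else 0.

Lemma cylinder_test_spec (P : nat -> Baire -> Prop) (a : Fin.t 1 -> nat) (f : Baire)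
    (m : nat) :
  cylinder_test P a (map f (seq 0 m)) = 1 <-> (forall g, agree g f m -> P (a Fin.F1) g).
Proof.
  unfold cylinder_test; rewrite length_map, length_seq.
  destruct (excluded_middle_informative _) as [Hc|Hc]; split; try discriminate; auto.
  - intros _ g Hg; apply Hc; intros i Hi; rewrite nth_map_seq; auto.
  - intro Hcyl; exfalso; apply Hc; intros g Hg; apply Hcyl; intros i Hi.
    rewrite Hg by exact Hi; apply nth_map_seq, Hi.
Qed.

(** An open set is a union of cylinders: [exists m, the cylinder f(0..m) lies in P_t]. *)
Definition open_template (P : nat -> Baire -> Prop) (t : term) : formula :=
  FEx 1 (FEq (TGf 1 (cylinder_test P) (fun _ => t) (TVar 1)) (TConst 1)).

Lemma open_template_defines (P : nat -> Baire -> Prop) :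
  (forall p, isOpen (P p)) -> uniformly_defines 0 P (open_template P).
Proof.
  intros HP t; split; [|split].
  - simpl; auto.
  - simpl; intros x [Hx1 [[[_ Hx]|Hx]|Hx]]; auto; lia.
  - intros Ht f env.
    change ((exists m, cylinder_test P (fun _ => evalT f (upd env 1 m) t)
                         (map f (seq 0 (S m))) = 1) <-> P (evalT f env t) f).
    setoid_rewrite cylinder_test_spec.
    setoid_rewrite (evalT_upd_fresh t f env 1); [|exact Ht].
    split.
    + intros [m Hm]; apply Hm; intros i Hi; reflexivity.
    + intro Hf; destruct (HP _ f Hf) as [m Hm]; exists m.
      intros g Hg; apply Hm; eapply agree_le; try exact Hg; lia.
Qed.

Definition pair_term (t : term) (x : nat) : term :=
  TFun 2 (fun a => to_nat (a Fin.F1, a (Fin.FS Fin.F1)))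
    (fun i => match i with Fin.F1 => t | Fin.FS _ => TVar x end).

Lemma pair_term_occ (t : term) (x y : nat) : occT y (pair_term t x) -> occT y t \/ y = x.
Proof.
  intros [i Hi]; revert Hi.
  apply (Fin.caseS' i (fun i => occT y (match i with Fin.F1 => t | Fin.FS _ => TVar x end) -> _));
    simpl; auto.
Qed.

(** Induction step: write [P_p] as the union of the Pi^0_{k+1} sets
    [A_{p,i}], uniformly define the complements [~ A_{p,i}] at level [k] with
    index [<p, i>], and obtain [P_t] as [exists i, ~ (F <t, i>)]. *)
Lemma uniform_definition_step (k : nat) :
  (forall P, (forall p, boldSigma (S k) (P p)) -> exists F, uniformly_defines k P F) ->
  forall P, (forall p, boldSigma (S (S k)) (P p)) ->
  exists F, uniformly_defines (S k) P F.
Proof.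
  intros IH P HP.
  destruct (choice (fun p (A : nat -> Baire -> Prop) =>
                      (forall i, boldSigma (S k) (fun f => ~ A i f)) /\
                      (forall f, P p f <-> exists i, A i f)) HP) as [A HA].
  set (x := S (S k)).
  destruct (IH (fun q f => ~ A (fst (of_nat q)) (snd (of_nat q)) f)) as [F HF].
  { intro q; apply HA. }
  exists (fun t => FEx x (dual (F (pair_term t x)))); intro t.
  destruct (HF (pair_term t x)) as [HS [Hfree Hsem]]; split; [|split].
  - exact (proj1 (dual_class _ _) HS).
  - intros y [Hyx Hy]; apply dual_free, Hfree, pair_term_occ in Hy.
    destruct Hy; [assumption | contradiction].
  - intros Ht f env.
    assert (Hslice : forall v,
              sat f (upd env x v) (F (pair_term t x)) <-> ~ A (evalT f env t) v f).
    { intro v; rewrite Hsem.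
      - change (~ A (fst (of_nat (to_nat (evalT f (upd env x v) t, upd env x v x))))
                  (snd (of_nat (to_nat (evalT f (upd env x v) t, upd env x v x)))) f
                <-> ~ A (evalT f env t) v f).
        rewrite cancel_of_to, evalT_upd_fresh by (intros y Hy; apply Ht in Hy; lia).
        unfold upd; rewrite Nat.eqb_refl; reflexivity.
      - intros y Hy; apply pair_term_occ in Hy.
        destruct Hy as [Hy| ->]; [apply Ht in Hy|]; unfold x; lia. }
    change ((exists v, sat f (upd env x v) (dual (F (pair_term t x)))) <->
            P (evalT f env t) f).
    setoid_rewrite dual_sat; setoid_rewrite Hslice; rewrite (proj2 (HA _)).
    split; intros [v Hv]; exists v; tauto.
Qed.

Lemma uniform_definition (k : nat) (P : nat -> Baire -> Prop) :
  (forall p, boldSigma (S k) (P p)) -> exists F, uniformly_defines k P F.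
Proof.
  revert P; induction k as [|k IH]; intros P HP.
  - exists (open_template P); apply open_template_defines, HP.
  - apply uniform_definition_step; assumption.
Qed.

(** Lower bound: a Sigma^0_{k+1} set is defined by the instance of its
    uniform definition at a closed term. *)
Lemma boldSigma_definable (k : nat) (A : Baire -> Prop) :
  boldSigma (S k) A ->
  exists phi, sentence phi /\ SigmaF (S k) phi /\ forall f, A f <-> models f phi.
Proof.
  intro HA; destruct (uniform_definition k (fun _ => A) (fun _ => HA)) as [F HF].
  destruct (HF (TConst 0)) as [HS [Hfree Hsem]].
  exists (F (TConst 0)); split; [|split].
  - intros x Hx; exact (Hfree x Hx).
  - exact HS.
  - intro f; unfold models; rewrite Hsem; [reflexivity | contradiction].
Qed.

(** Lower bound for Pi^0_{k+1}, by dualizing the definition of the complement. *)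
Lemma boldPi_definable (k : nat) (A : Baire -> Prop) :
  boldPi (S k) A ->
  exists phi, sentence phi /\ PiF (S k) phi /\ forall f, A f <-> models f phi.
Proof.
  intro HA; destruct (boldSigma_definable k _ HA) as [phi [Hs [HS Hdef]]].
  destruct (definable_complement _ _ _ Hs HS Hdef) as [Hs' [HP Hdef']].
  exists (dual phi); split; [|split]; auto.
  intro f; rewrite <- Hdef'; split; [tauto | apply NNPP].
Qed.

Lemma SigmaF_sentence_bold (k : nat) (A : Baire -> Prop) (phi : formula) :
  SigmaF (S k) phi -> (forall f, A f <-> models f phi) -> boldSigma (S k) A.
Proof.
  intros HS Hdef; eapply boldSigma_ext; [|exact (proj1 (formula_bold k phi (fun _ => 0)) HS)].
  intro f; rewrite Hdef; reflexivity.
Qed.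

Lemma PiF_sentence_bold (k : nat) (A : Baire -> Prop) (phi : formula) :
  PiF (S k) phi -> (forall f, A f <-> models f phi) -> boldPi (S k) A.
Proof.
  intros HP Hdef; eapply boldSigma_ext; [|exact (proj2 (formula_bold k phi (fun _ => 0)) HP)].
  intro f; simpl; rewrite Hdef; reflexivity.
Qed.

(** Two sentences with the same models, one Sigma_n and one Pi_n, witness
    that the first is Delta_n: for sentences the assignment is irrelevant. *)
Lemma sentence_DeltaF (n : nat) (phi chi : formula) :
  sentence phi -> SigmaF n phi -> sentence chi -> PiF n chi ->
  (forall f, models f phi <-> models f chi) -> DeltaF n phi.
Proof.
  intros Hs Hphi Hs' Hchi Heq; split.
  - exists phi; split; [exact Hphi | reflexivity].
  - exists chi; split; [exact Hchi|]; intros f env.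
    rewrite (sentence_sat phi f env Hs), (sentence_sat chi f env Hs'); apply Heq.
Qed.

Theorem mainTheorem9 (S : Baire -> Prop) (n : nat) (hn : 0 < n) :
  (boldSigma n S <->
     exists phi, sentence phi /\ SigmaF n phi /\ forall f, S f <-> models f phi) /\
  (boldPi n S <->
     exists phi, sentence phi /\ PiF n phi /\ forall f, S f <-> models f phi) /\
  (boldDelta n S <->
     exists phi, sentence phi /\ DeltaF n phi /\ forall f, S f <-> models f phi).
Proof.
  destruct n as [|k]; [lia|]; split; [|split].
  - split; [apply boldSigma_definable|].
    intros [phi [_ [HS Hdef]]]; exact (SigmaF_sentence_bold k S phi HS Hdef).
  - split; [apply boldPi_definable|].
    intros [phi [_ [HP Hdef]]]; exact (PiF_sentence_bold k S phi HP Hdef).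
  - split.
    + intros [HS HP].
      destruct (boldSigma_definable k _ HS) as [phi [Hs [Hphi Hdef]]].
      destruct (boldPi_definable k _ HP) as [chi [Hs' [Hchi Hdef']]].
      exists phi; split; [exact Hs|]; split; [|exact Hdef].
      apply (sentence_DeltaF _ phi chi Hs Hphi Hs' Hchi).
      intro f; rewrite <- Hdef, <- Hdef'; reflexivity.
    + intros [phi [_ [[[psi [Hpsi Epsi]] [chi [Hchi Echi]]] Hdef]]]; split.
      * apply (SigmaF_sentence_bold k S psi Hpsi).
        intro f; rewrite Hdef; apply Epsi.
      * apply (PiF_sentence_bold k S chi Hchi).
        intro f; rewrite Hdef; apply Echi.
Qed.
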